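(* Let $R$ be a principal ideal domain and $p$ a prime element of $R$. The ideal $I = (X^2-p,\ X^3)$ of $R[X]$ has radical $(X,p)$, which is a maximal ideal of $R[X]$; hence $I$ is a primary ideal of $R[X]$ which is not power stable.
   Context: An ideal $I$ of the polynomial ring $R[X]$ over an integral domain $R$ is called power stable if $I^t\cap R = (I\cap R)^t$ for all integers $t\geq 1$. *)

From HB Require Import structures.
From mathcomp Require Import all_boot all_order all_algebra.
Set Implicit Arguments. Unset Strict Implicit. Unset Printing Implicit Defensive.
Import GRing.Theory.
Local Open Scope ring_scope.

Section Ideals.
Variable T : comNzRingType.

Definition is_ideal (I : T -> Prop) : Prop :=
  I 0 /\ (forall x y, I x -> I y -> I (x + y)) /\ (forall r x, I x -> I (r * x)).

Definition dvdr (a b : T) : Prop := exists c, b = c * a.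

Definition principal_ideal (a : T) : T -> Prop := fun x => dvdr a x.

Definition ideal2 (f g : T) : T -> Prop :=
  fun h => exists a b, h = a * f + b * g.

Definition ideal_mul (J K : T -> Prop) : T -> Prop :=
  fun h => exists n (a b : 'I_n -> T),
    (forall i, J (a i)) /\ (forall i, K (b i)) /\ h = \sum_(i < n) a i * b i.

Fixpoint ideal_pow (I : T -> Prop) (t : nat) : T -> Prop :=
  match t with
  | 0%N => fun _ => True
  | t'.+1 => ideal_mul (ideal_pow I t') I
  end.

Definition radical (I : T -> Prop) : T -> Prop := fun x => exists n, I (x ^+ n).

Definition maximal_ideal (M : T -> Prop) : Prop :=
  is_ideal M /\ ~ M 1 /\
  (forall J, is_ideal J -> (forall x, M x -> J x) -> J 1 \/ (forall x, J x <-> M x)).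

Definition primary_ideal (I : T -> Prop) : Prop :=
  is_ideal I /\ ~ I 1 /\
  (forall a b, I (a * b) -> I a \/ exists n, I (b ^+ n)).

End Ideals.

Definition is_PID (R : idomainType) : Prop :=
  forall I : R -> Prop, is_ideal I -> exists a, forall x, I x <-> principal_ideal a x.

Definition prime_elem (R : idomainType) (p : R) : Prop :=
  p != 0 /\ p \isn't a GRing.unit /\
  (forall a b, dvdr p (a * b) -> dvdr p a \/ dvdr p b).

(* contraction I ∩ R of an ideal of R[X] *)
Definition contract (R : idomainType) (I : {poly R} -> Prop) : R -> Prop :=
  fun r => I r%:P.

Definition power_stable (R : idomainType) (I : {poly R} -> Prop) : Prop :=
  forall t : nat, (1 <= t)%N ->
    forall r : R, contract (ideal_pow I t) r <-> ideal_pow (contract I) t r.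

From HB Require Import structures.
From mathcomp Require Import all_boot all_order all_algebra.
From mathcomp Require Import ring.
From Stdlib Require Import Classical.
Set Implicit Arguments. Unset Strict Implicit. Unset Printing Implicit Defensive.
Import GRing.Theory.
Local Open Scope ring_scope.

(* Let R be a PID, p a prime of R, I = (X^2 - p, X^3) and M = (X, p) in R[X].

   The proof uses the evaluation at 0: a polynomial f lies in M iff p
   divides f(0).  Then
   - I ⊆ M, and M^3 ⊆ I because X^3, X^2 p, X p^2, p^3 all lie in I, so by
     primality of p the radical of I is M;
   - if f is not in M then p does not divide f(0); in a PID this gives a
     Bezout relation 1 = U p + V f(0), hence 1 - V f ∈ M: every element
     outside M is invertible modulo M, so M is maximal;
   - a general lemma says that an ideal whose radical is such an ideal M is
     primary;
   - finally every constant of I is divisible by p^2, so every constant of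
     (I ∩ R)^2 is divisible by p^4, whereas p^3 = (2X^2 + p)(X^2 - p)^2
     - 3X(X^2 - p)X^3 + X^3 X^3 lies in I^2: I is not power stable. *)

Section CommutativeRingIdeals.
Variable T : comNzRingType.
Implicit Types (x y d e : T) (J : T -> Prop).

Lemma dvdr_add d x y : dvdr d x -> dvdr d y -> dvdr d (x + y).
Proof. by move=> [c ->] [c' ->]; exists (c + c'); rewrite mulrDl. Qed.

Lemma dvdr_mul d e x y : dvdr d x -> dvdr e y -> dvdr (d * e) (x * y).
Proof. by move=> [c ->] [c' ->]; exists (c * c'); ring. Qed.

Lemma dvdr_sum d n (F : 'I_n -> T) :
  (forall i, dvdr d (F i)) -> dvdr d (\sum_(i < n) F i).
Proof.
move=> dF; apply: (big_ind (dvdr d)) => //; last exact: dvdr_add.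
by exists 0; rewrite mul0r.
Qed.

Lemma ideal2_is_ideal (f g : T) : is_ideal (ideal2 f g).
Proof.
split; first by exists 0, 0; ring.
split.
  by move=> _ _ [a [b ->]] [c [e ->]]; exists (a + c), (b + e); ring.
by move=> r _ [a [b ->]]; exists (r * a), (r * b); ring.
Qed.

Lemma exprD_multiple x y n : exists z, (x + y) ^+ n = x ^+ n + y * z.
Proof.
elim: n => [|n [z IH]]; first by exists 0; rewrite !expr0 mulr0 addr0.
by exists (x ^+ n + z * (x + y)); rewrite !exprS IH; ring.
Qed.

Definition invertible_mod (M : T -> Prop) : Prop :=
  forall b, ~ M b -> exists m r, M m /\ 1 = m + r * b.

Lemma maximal_of_invertible_mod M :
  is_ideal M -> ~ M 1 -> invertible_mod M -> maximal_ideal M.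
Proof.
move=> idM notM1 invM; do 2!split => //.
move=> J [_ [Jadd Jmul]] MJ.
case: (classic (J 1)) => [J1|notJ1]; [by left | right] => x.
split=> [Jx|]; last exact: MJ.
apply: NNPP => notMx; apply: notJ1.
have [m [r [Mm ->]]] := invM x notMx.
by apply: Jadd; [exact: MJ | exact: Jmul].
Qed.

Lemma primary_of_radical I M :
  is_ideal I -> (forall f, radical I f <-> M f) -> ~ M 1 -> invertible_mod M ->
  primary_ideal I.
Proof.
move=> idI radIM notM1 invM; have [_ [Iadd Imul]] := idI.
have IM f : I f -> M f by move=> If; apply/radIM; exists 1%N; rewrite expr1.
split=> //; split=> [/IM // | a b Iab].
case: (classic (M b)) => [/radIM [n Ibn] | notMb]; first by right; exists n.
left; have [m [r [/radIM [n Imn] one_eq]]] := invM b notMb.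
have [z expand] := exprD_multiple m (r * b) n.
have -> : a = a * m ^+ n + (r * z) * (a * b).
  by rewrite -[a in LHS]mulr1 -(expr1n T n) one_eq expand; ring.
by apply: Iadd; apply: Imul.
Qed.

Lemma ideal_pow1 J x : J x -> ideal_pow J 1 x.
Proof.
move=> Jx; exists 1%N, (fun _ => 1), (fun _ => x).
by do 2!split => //; rewrite big_ord1 mul1r.
Qed.

Lemma ideal2_sq_mem (f g a b c : T) :
  ideal_pow (ideal2 f g) 2 (a * f * f + b * f * g + c * g * g).
Proof.
exists 2%N, (fun i : 'I_2 => if i == ord0 then a * f + b * g else c * g),
  (fun i : 'I_2 => if i == ord0 then f else g).
split; first by move=> i; apply: ideal_pow1; case: ifP;
  [exists a, b | exists 0, c]; ring.
split; first by move=> i; case: ifP; [exists 1, 0 | exists 0, 1]; ring.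
by rewrite big_ord_recr big_ord1 /=; ring.
Qed.

Lemma ideal_pow_dvdr J d t x :
  (forall y, J y -> dvdr d y) -> ideal_pow J t x -> dvdr (d ^+ t) x.
Proof.
move=> dJ; elim: t x => [|t IH] x; first by exists x; rewrite expr0 mulr1.
move=> [n [a [b [Ja [Jb ->]]]]]; apply: dvdr_sum => i.
by rewrite exprS mulrC; apply: dvdr_mul; [exact: IH (Ja i) | exact: dJ (Jb i)].
Qed.

End CommutativeRingIdeals.

Lemma ideal2_XC (R : comNzRingType) (c : R) (f : {poly R}) :
  ideal2 'X c%:P f <-> dvdr c f.[0].
Proof.
split=> [[a [b ->]] | [e e_def]]; first by exists b.[0]; rewrite !hornerE.
have /factor_theorem [q q_def] : root (f - (f.[0])%:P) 0.
  by rewrite /root !hornerE subrr.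
exists q, e%:P; rewrite -polyCM -e_def subr0 in q_def *.
by rewrite -q_def subrK.
Qed.

Section PrimeElements.
Variables (R : idomainType) (p : R).
Hypothesis hp : prime_elem p.

Lemma prime_not_dvdr1 : ~ dvdr p 1.
Proof.
move=> [c c_def]; case: hp => _ [/negP p_nonunit _]; apply: p_nonunit.
by apply/unitrPr; exists c; rewrite mulrC -c_def.
Qed.

Lemma prime_dvdr_exp x n : dvdr p (x ^+ n) -> dvdr p x.
Proof.
elim: n => [|n IH]; first by rewrite expr0 => /prime_not_dvdr1.
by rewrite exprS => /hp.2.2 [].
Qed.

(* p^(n+1) does not divide p^n, since p is a nonzero nonunit. *)
Lemma prime_pow_not_dvdr n : ~ dvdr (p ^+ n.+1) (p ^+ n).
Proof.
move=> [c c_def]; apply: prime_not_dvdr1; exists c.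
have : p ^+ n * (1 - c * p) = 0 by rewrite mulrBr mulr1 {1}c_def exprS; ring.
move/eqP; rewrite mulf_eq0 expf_eq0 (negbTE hp.1) andbF /= subr_eq0.
by move/eqP.
Qed.

Lemma pid_prime_bezout c :
  is_PID R -> ~ dvdr p c -> exists U V, 1 = U * p + V * c.
Proof.
move=> hR not_pc.
have [d d_gen] := hR _ (ideal2_is_ideal p c).
have [u [v d_eq]] : ideal2 p c d by apply/d_gen; exists 1; rewrite mul1r.
have [e p_eq] : dvdr d p by apply/d_gen; exists 1, 0; ring.
have [g c_eq] : dvdr d c by apply/d_gen; exists 0, 1; ring.
have : dvdr p (e * d) by exists 1; rewrite -p_eq mul1r.
case/hp.2.2 => [[k e_eq] | [k d_eq']]; last first.
  by case: not_pc; exists (g * k); rewrite c_eq d_eq'; ring.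
have kd1 : k * d = 1.
  have : p * (1 - k * d) = 0 by rewrite mulrBr mulr1 {1}p_eq e_eq; ring.
  move/eqP; rewrite mulf_eq0 (negbTE hp.1) subr_eq0 /=.
  by move/eqP.
by exists (k * u), (k * v); rewrite -kd1 d_eq; ring.
Qed.

End PrimeElements.

Section PrimaryNotPowerStable.
Variables (R : idomainType) (p : R).
Hypothesis hp : prime_elem p.

Definition idealI : {poly R} -> Prop := ideal2 ('X^2 - p%:P) 'X^3.
Definition idealM : {poly R} -> Prop := ideal2 'X p%:P.

Lemma I_sub_M f : idealI f -> idealM f.
Proof.
by move=> [a [b ->]]; exists (a * 'X + b * 'X^2), (- a); ring.
Qed.

(* M^3 ⊆ I, via X^2 p = -X^2 (X^2 - p) + X X^3 and
   p^2 = -(X^2 + p)(X^2 - p) + X X^3. *)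
Lemma M_cube_sub_I f : idealM f -> idealI (f ^+ 3).
Proof.
move=> [a [b ->]]; pose P : {poly R} := p%:P.
exists (- (1 + 1 + 1) * a * a * b * 'X^2 - (1 + 1 + 1) * a * b * b * 'X * ('X^2 + P)
        - b * b * b * P * ('X^2 + P)),
  (a * a * a + (1 + 1 + 1) * a * a * b * 'X + (1 + 1 + 1) * a * b * b * 'X^2
   + b * b * b * P * 'X).
by rewrite /P; ring.
Qed.

(* rad I = M: M^3 ⊆ I ⊆ M, and M is radical since p is prime. *)
Lemma radical_I f : radical idealI f <-> idealM f.
Proof.
split=> [[n /I_sub_M /ideal2_XC] | Mf]; last by exists 3%N; exact: M_cube_sub_I.
by rewrite horner_exp => /(prime_dvdr_exp hp) /ideal2_XC.
Qed.

Lemma not_M1 : ~ idealM 1.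
Proof. by move/ideal2_XC; rewrite hornerE; exact: prime_not_dvdr1. Qed.

(* If f is outside M, a Bezout relation 1 = U p + V f(0) puts 1 - V f in M. *)
Lemma M_invertible_mod : is_PID R -> invertible_mod idealM.
Proof.
move=> hR f notMf.
have [U [V bezout]] : exists U V, 1 = U * p + V * f.[0].
  by apply: pid_prime_bezout => // /ideal2_XC.
exists (1 - V%:P * f), V%:P; split; last by ring.
by apply/ideal2_XC; exists U; rewrite !hornerE bezout; ring.
Qed.

(* I ∩ R ⊆ (p^2): comparing the coefficients of degree 0 and 2 in
   r = a (X^2 - p) + b X^3 gives r = -a_0 p and a_0 = a_2 p. *)
Lemma contract_I_dvdr r : idealI r%:P -> dvdr (p ^+ 2) r.
Proof.
move=> [a [b r_eq]].
have coef_r i : r%:P`_i = (a * 'X^2)`_i - a`_i * p + (b * 'X^3)`_i.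
  by rewrite r_eq mulrBr coefD coefB coefMC.
have := coef_r 0%N; have := coef_r 2%N; rewrite !coefMXn !coefC subnn /=.
move=> /eqP; rewrite addr0 eq_sym subr_eq0 => /eqP a0_eq ->.
by exists (- a`_2); rewrite a0_eq; ring.
Qed.

(* p^3 = (2X^2 + p)(X^2 - p)^2 - 3X (X^2 - p) X^3 + X^3 X^3 lies in I^2. *)
Lemma p_cube_in_I2 : contract (ideal_pow idealI 2) (p ^+ 3).
Proof.
rewrite /contract.
suff -> : (p ^+ 3)%:P = ((1 + 1) * 'X^2 + p%:P) * ('X^2 - p%:P) * ('X^2 - p%:P)
    + (- (1 + 1 + 1) * 'X) * ('X^2 - p%:P) * 'X^3 + 1 * 'X^3 * 'X^3 :> {poly R}.
  exact: (ideal2_sq_mem ('X^2 - p%:P) 'X^3).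
by ring.
Qed.

Lemma not_power_stable_I : ~ power_stable idealI.
Proof.
move=> stable; have /(stable 2%N isT) I2_p3 := p_cube_in_I2.
apply: (prime_pow_not_dvdr hp (n := 3)).
suff : dvdr ((p ^+ 2) ^+ 2) (p ^+ 3) by rewrite -exprM.
exact: (ideal_pow_dvdr contract_I_dvdr I2_p3).
Qed.

End PrimaryNotPowerStable.

Theorem mainTheorem19 (R : idomainType) (hR : is_PID R) (p : R) (hp : prime_elem p) :
  let I := ideal2 ('X^2 - p%:P) ('X^3 : {poly R}) in
  let M := ideal2 ('X : {poly R}) p%:P in
  (forall f, radical I f <-> M f) /\ maximal_ideal M /\
  primary_ideal I /\ ~ power_stable I.
Proof.
move=> I M.
have radIM : forall f, radical I f <-> M f := radical_I hp.
have invM : invertible_mod M := M_invertible_mod hp hR.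
have notM1 : ~ M 1 := not_M1 hp.
split=> //; split; first exact: maximal_of_invertible_mod (ideal2_is_ideal _ _) notM1 invM.
split; first exact: primary_of_radical (ideal2_is_ideal _ _) radIM notM1 invM.
exact: not_power_stable_I hp.
Qed.
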